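(* For every hexagon $X$ of the dappled triangular grid $\mathbf{T}$, the hued graph $X^{-}$ is a retract of the hued graph $\mathbf{T}^{-}$.
   Context: A hued graph is a graph with a proper coloring $\psi:V\to\mathbb{Z}_3$ (hue); a dappled graph is a hued graph with additionally a proper coloring $\varphi:V\to\mathbb{Z}_2^2$ (color). For a dappled graph $G$, $G^{-}$ is the hued graph obtained by forgetting the colors. The dappled triangular grid $\mathbf{T}$ has vertex set $\mathbb{Z}^2$, with $(i_1,j_1)$ and $(i_2,j_2)$ adjacent iff $(i_2-i_1,j_2-j_1)\in\{\pm(1,0),\pm(0,1),\pm(1,1)\}$, hue $(i+j)\bmod 3$ and color $(i\bmod 2,j\bmod 2)$ at $(i,j)$. A hexagon is the dappled subgraph of $\mathbf{T}$ induced by a vertex and its neighbors. A homomorphism of hued graphs maps adjacent vertices to adjacent vertices and preserves hue. A retract of a hued graph $G$ is an induced subgraph $H$ of $G$ for which there exists a retraction, i.e. a homomorphism of hued graphs $f:V(G)\to V(H)$ with $f(v)=v$ for all $v\in V(H)$. *)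

From Stdlib Require Import ZArith.
Open Scope Z_scope.

Definition vtx := (Z * Z)%type.

Definition adj (u v : vtx) : Prop :=
  let d := (fst v - fst u, snd v - snd u) in
  d = (1, 0) \/ d = (-1, 0) \/ d = (0, 1) \/ d = (0, -1) \/
  d = (1, 1) \/ d = (-1, -1).

(* hue psi(i,j) = (i+j) mod 3 ; colours are forgotten in T^- *)
Definition hue (v : vtx) : Z := (fst v + snd v) mod 3.

Definition in_hexagon (c v : vtx) : Prop := v = c \/ adj c v.

(* f : V(T) -> V(X) is a retraction of hued graphs from T^- onto the
   induced subgraph X^- (X the hexagon centred at c). Since X is induced,
   adjacency in X is adjacency in T. *)
Definition hexagon_retraction (c : vtx) (f : vtx -> vtx) : Prop :=
  (forall v, in_hexagon c (f v)) /\
  (forall u v, adj u v -> adj (f u) (f v)) /\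
  (forall v, hue (f v) = hue v) /\
  (forall v, in_hexagon c v -> f v = v).

(* Up to translation, which preserves adjacency and shifts every hue by the
   same constant, we may take the hexagon centred at the origin.  Its hue-0
   vertex is the centre, and far from the hexagon we send each vertex to the
   vertex of the same hue in the triangle (0,0), (1,0), (0,-1): adjacent
   vertices have distinct hues, so this is a homomorphism.  Near the hexagon
   this rule must be corrected at (-2,0) and (0,2); the finitely many edges
   meeting the hexagon or these two vertices are then checked by computation. *)
From Stdlib Require Import ZArith Lia Bool List.
Import ListNotations.
Open Scope Z_scope.

Definition diff (u v : vtx) : vtx := (fst v - fst u, snd v - snd u).

Definition shift (c v : vtx) : vtx := (fst c + fst v, snd c + snd v).

Definition unshift (c v : vtx) : vtx := (fst v - fst c, snd v - snd c).

Definition dirs : list vtx := [(1, 0); (-1, 0); (0, 1); (0, -1); (1, 1); (-1, -1)].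

Lemma adj_diff (u v : vtx) : adj u v <-> In (diff u v) dirs.
Proof.
  unfold adj, diff; cbv zeta; simpl.
  split; intros H; repeat destruct H as [H | H]; auto 7.
  contradiction.
Qed.

Lemma shift_unshift (c v : vtx) : shift c (unshift c v) = v.
Proof. destruct c, v; unfold shift, unshift; simpl; f_equal; lia. Qed.

Lemma unshift_shift (c v : vtx) : unshift c (shift c v) = v.
Proof. destruct c, v; unfold shift, unshift; simpl; f_equal; lia. Qed.

Lemma shift_diff (u v : vtx) : shift u (diff u v) = v.
Proof. destruct u, v; unfold shift, diff; simpl; f_equal; lia. Qed.

Lemma diff_shift (c u v : vtx) : diff (shift c u) (shift c v) = diff u v.
Proof. unfold diff, shift; simpl; f_equal; lia. Qed.

Lemma adj_shift (c u v : vtx) : adj (shift c u) (shift c v) <-> adj u v.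
Proof. rewrite !adj_diff, diff_shift; reflexivity. Qed.

Lemma diff_swap (u v : vtx) : diff v u = (- fst (diff u v), - snd (diff u v)).
Proof. unfold diff; simpl; f_equal; lia. Qed.

Lemma dirs_opp (d : vtx) : In d dirs -> In (- fst d, - snd d) dirs.
Proof. simpl; intros H; repeat destruct H as [<- | H]; simpl; tauto. Qed.

Lemma adj_sym (u v : vtx) : adj u v -> adj v u.
Proof. rewrite !adj_diff, (diff_swap u v); apply dirs_opp. Qed.

Lemma shift_inj (c u v : vtx) : shift c u = shift c v -> u = v.
Proof. intros H; rewrite <- (unshift_shift c u), H; apply unshift_shift. Qed.

Lemma shift_origin (c : vtx) : shift c (0, 0) = c.
Proof. destruct c; unfold shift; simpl; f_equal; lia. Qed.

Lemma hue_shift (c v : vtx) : hue (shift c v) = (fst c + snd c + hue v) mod 3.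
Proof. unfold hue, shift; simpl; rewrite Z.add_mod_idemp_r by lia; f_equal; lia. Qed.

Lemma in_hexagon_shift (c o v : vtx) :
  in_hexagon (shift c o) (shift c v) <-> in_hexagon o v.
Proof.
  unfold in_hexagon; rewrite adj_shift.
  split; intros [H | H]; auto; left; [exact (shift_inj _ _ _ H) | congruence].
Qed.

Lemma hexagon_retraction_shift (c : vtx) (f : vtx -> vtx) :
  hexagon_retraction (0, 0) f ->
  hexagon_retraction c (fun v => shift c (f (unshift c v))).
Proof.
  intros (f_in & f_adj & f_hue & f_fix).
  assert (in_hexagon_shift0 : forall v, in_hexagon c (shift c v) <-> in_hexagon (0, 0) v).
  { intros v; rewrite <- (in_hexagon_shift c (0, 0) v), shift_origin; reflexivity. }
  split; [| split; [| split]].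
  - intros v; apply in_hexagon_shift0, f_in.
  - intros u v H; apply adj_shift, f_adj, (adj_shift c).
    rewrite !shift_unshift; exact H.
  - intros v; rewrite hue_shift, f_hue, <- hue_shift, shift_unshift; reflexivity.
  - intros v H; rewrite f_fix; [apply shift_unshift |].
    apply in_hexagon_shift0; rewrite shift_unshift; exact H.
Qed.

Lemma hue_range (v : vtx) : 0 <= hue v < 3.
Proof. apply Z.mod_pos_bound; lia. Qed.

Lemma adj_hue_neq (u v : vtx) : adj u v -> hue u <> hue v.
Proof.
  rewrite adj_diff; intros H; rewrite <- (shift_diff u v); revert H.
  generalize (diff u v) as d; destruct u; intros d Hd; repeat destruct Hd as [<- | Hd];
    try contradiction; unfold hue, shift; simpl; Z.div_mod_to_equations; lia.
Qed.

Definition vtx_eqb (p q : vtx) : bool := (fst p =? fst q) && (snd p =? snd q).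

Lemma vtx_eqb_spec (p q : vtx) : vtx_eqb p q = true <-> p = q.
Proof.
  destruct p, q; unfold vtx_eqb; simpl; rewrite andb_true_iff, !Z.eqb_eq.
  split; [intros [-> ->] | intros H; injection H]; auto.
Qed.

Definition memb (v : vtx) (l : list vtx) : bool := existsb (vtx_eqb v) l.

Lemma memb_In (v : vtx) (l : list vtx) : memb v l = true <-> In v l.
Proof.
  unfold memb; rewrite existsb_exists.
  split; [intros (x & Hx & E); apply vtx_eqb_spec in E; subst; exact Hx |].
  intros Hv; exists v; split; [exact Hv | apply vtx_eqb_spec; reflexivity].
Qed.

Lemma In_vtx_dec (v : vtx) (l : list vtx) : In v l \/ ~ In v l.
Proof.
  destruct (memb v l) eqn:E; [left; apply memb_In, E |].
  right; rewrite <- memb_In, E; discriminate.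
Qed.

Definition hexagon0 : list vtx := (0, 0) :: dirs.

Lemma in_hexagon0 (v : vtx) : in_hexagon (0, 0) v <-> In v hexagon0.
Proof.
  unfold in_hexagon; rewrite adj_diff.
  replace (diff (0, 0) v) with v by (destruct v; unfold diff; simpl; f_equal; lia).
  simpl; split; intros [H | H]; auto.
Qed.

Definition tri (h : Z) : vtx := if h =? 0 then (0, 0) else if h =? 1 then (1, 0) else (0, -1).

Lemma tri_in_hexagon0 (h : Z) : In (tri h) hexagon0.
Proof. unfold tri; destruct (h =? 0), (h =? 1); simpl; tauto. Qed.

Lemma hue_tri (h : Z) : 0 <= h < 3 -> hue (tri h) = h.
Proof. intros Hh; assert (h = 0 \/ h = 1 \/ h = 2) as [-> | [-> | ->]] by lia; reflexivity. Qed.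

Lemma tri_adj (h h' : Z) : 0 <= h < 3 -> 0 <= h' < 3 -> h <> h' -> adj (tri h) (tri h').
Proof.
  intros Hh Hh' Hne; apply adj_diff.
  assert (h = 0 \/ h = 1 \/ h = 2) as [-> | [-> | ->]] by lia;
  assert (h' = 0 \/ h' = 1 \/ h' = 2) as [-> | [-> | ->]] by lia;
  try lia; simpl; tauto.
Qed.

(* Some exceptions are unavoidable: each vertex [2 d] with [d] in [dirs] allows
   its hue class only the two rim vertices of that hue adjacent to [d], and the
   three such constraints on hue 2 have no common solution. *)
Definition hex_retract (v : vtx) : vtx :=
  if memb v hexagon0 then v
  else if vtx_eqb v (-2, 0) then (-1, -1)
  else if vtx_eqb v (0, 2) then (1, 1)
  else tri (hue v).

Definition near : list vtx := (-2, 0) :: (0, 2) :: hexagon0.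

Lemma hex_retract_far (v : vtx) : ~ In v near -> hex_retract v = tri (hue v).
Proof.
  intros Hv; unfold hex_retract.
  destruct (memb v hexagon0) eqn:E0; [exfalso; apply Hv; do 2 right; apply memb_In, E0 |].
  destruct (vtx_eqb v (-2, 0)) eqn:E1; [exfalso; apply Hv; left; symmetry; apply vtx_eqb_spec, E1 |].
  destruct (vtx_eqb v (0, 2)) eqn:E2; [exfalso; apply Hv; right; left; symmetry; apply vtx_eqb_spec, E2 |].
  reflexivity.
Qed.

Lemma hex_retract_near (v : vtx) : In v near ->
  In (hex_retract v) hexagon0 /\ hue (hex_retract v) = hue v /\
  forall d, In d dirs -> adj (hex_retract v) (hex_retract (shift v d)).
Proof.
  assert (check : forallb (fun v =>
    memb (hex_retract v) hexagon0 && (hue (hex_retract v) =? hue v) &&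
    forallb (fun d => memb (diff (hex_retract v) (hex_retract (shift v d))) dirs) dirs)
    near = true) by (vm_compute; reflexivity).
  intros Hv; rewrite forallb_forall in check; specialize (check v Hv).
  rewrite !andb_true_iff, memb_In, Z.eqb_eq, forallb_forall in check.
  destruct check as [[Hin Hhue] Hadj]; split; [exact Hin | split; [exact Hhue |]].
  intros d Hd; apply adj_diff, memb_In, Hadj, Hd.
Qed.

Lemma hex_retract_adj (u v : vtx) : adj u v -> adj (hex_retract u) (hex_retract v).
Proof.
  intros H.
  destruct (In_vtx_dec u near) as [Hu | Hu].
  { rewrite <- (shift_diff u v); apply hex_retract_near, adj_diff, H; exact Hu. }
  destruct (In_vtx_dec v near) as [Hv | Hv].
  { apply adj_sym; rewrite <- (shift_diff v u).
    apply hex_retract_near, adj_diff, adj_sym, H; exact Hv. }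
  rewrite !hex_retract_far by assumption.
  apply tri_adj; auto using hue_range, adj_hue_neq.
Qed.

Lemma hex_retract_retraction : hexagon_retraction (0, 0) hex_retract.
Proof.
  split; [| split; [| split]].
  - intros v; apply in_hexagon0; destruct (In_vtx_dec v near) as [Hv | Hv].
    + apply hex_retract_near, Hv.
    + rewrite hex_retract_far by exact Hv; apply tri_in_hexagon0.
  - exact hex_retract_adj.
  - intros v; destruct (In_vtx_dec v near) as [Hv | Hv].
    + apply hex_retract_near, Hv.
    + rewrite hex_retract_far by exact Hv; apply hue_tri, hue_range.
  - intros v Hv; unfold hex_retract.
    rewrite (proj2 (memb_In v hexagon0)); [reflexivity | apply in_hexagon0, Hv].
Qed.

Theorem lemma10 : forall c : vtx, exists f : vtx -> vtx, hexagon_retraction c f.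
Proof.
  intros c; exists (fun v => shift c (hex_retract (unshift c v))).
  apply hexagon_retraction_shift, hex_retract_retraction.
Qed.
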